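(* For any Bessel sequence $\{x_k\}_{k=1}^\infty$ in the real or complex space $\ell_2$, the family $\{\tilde{x}_k\}_{k=1}^\infty$ is a Bessel sequence in $\tilde{\mathbb{H}}$. However, $\{\tilde{x}_k\}_{k=1}^\infty$ is not a frame for $\tilde{\mathbb{H}}$.
   Context: A sequence $\{y_k\}$ in a Hilbert space $K$ is Bessel if there is $B<\infty$ with $\sum_k|\langle y,y_k\rangle|^2\le B\|y\|^2$ for all $y\in K$; it is a frame if additionally there is $A>0$ with $A\|y\|^2\le\sum_k|\langle y,y_k\rangle|^2$. Let $\tilde{\mathbb{H}}=\left(\sum_{i=1}^\infty\oplus\ell_2\right)_{\ell_2}$ be the $\ell_2$-direct sum of countably many copies of real $\ell_2$, with inner product $\langle(\vec{x}_i),(\vec{y}_i)\rangle=\sum_i\langle\vec{x}_i,\vec{y}_i\rangle$. For $x=(x_i)\in\ell_2$, $\tilde{x}=(\vec{x}_1,\vec{x}_2,\dots)\in\tilde{\mathbb{H}}$ where, in the real case, $\vec{x}_n=(x_nx_n,x_nx_{n+1},x_nx_{n+2},\dots)$, and in the complex case, $\vec{x}_n=(|x_n|^2,\mathrm{Re}(\bar{x}_nx_{n+1}),\mathrm{Im}(\bar{x}_nx_{n+1}),\mathrm{Re}(\bar{x}_nx_{n+2}),\mathrm{Im}(\bar{x}_nx_{n+2}),\dots)$. *)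

From Stdlib Require Import Reals.
From Coquelicot Require Import Coquelicot.
Open Scope R_scope.

Definition l2R (x : nat -> R) : Prop := ex_series (fun i => (x i) ^ 2).
Definition normR2 (x : nat -> R) : R := Series (fun i => (x i) ^ 2).
Definition innR (x y : nat -> R) : R := Series (fun i => x i * y i).

Definition l2C (x : nat -> C) : Prop := ex_series (fun i => (Cmod (x i)) ^ 2).
Definition normC2 (x : nat -> C) : R := Series (fun i => (Cmod (x i)) ^ 2).
Definition innC (x y : nat -> C) : C :=
  (Series (fun i => Re (Cmult (x i) (Cconj (y i)))),
   Series (fun i => Im (Cmult (x i) (Cconj (y i))))).

(* ---------- H~ = (sum_i (+) real l2)_{l2} ; elements : nat -> nat -> R ---------- *)
Definition inHt (u : nat -> nat -> R) : Prop :=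
  (forall i, ex_series (fun j => (u i j) ^ 2)) /\
  ex_series (fun i => Series (fun j => (u i j) ^ 2)).
Definition normHt2 (u : nat -> nat -> R) : R :=
  Series (fun i => Series (fun j => (u i j) ^ 2)).
Definition innHt (u v : nat -> nat -> R) : R :=
  Series (fun i => Series (fun j => u i j * v i j)).

Definition BesselR (x : nat -> nat -> R) : Prop :=
  (forall k, l2R (x k)) /\
  exists B : R, forall y, l2R y ->
    ex_series (fun k => (innR y (x k)) ^ 2) /\
    Series (fun k => (innR y (x k)) ^ 2) <= B * normR2 y.

Definition BesselC (x : nat -> nat -> C) : Prop :=
  (forall k, l2C (x k)) /\
  exists B : R, forall y, l2C y ->
    ex_series (fun k => (Cmod (innC y (x k))) ^ 2) /\
    Series (fun k => (Cmod (innC y (x k))) ^ 2) <= B * normC2 y.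

Definition BesselHt (x : nat -> nat -> nat -> R) : Prop :=
  (forall k, inHt (x k)) /\
  exists B : R, forall y, inHt y ->
    ex_series (fun k => (innHt y (x k)) ^ 2) /\
    Series (fun k => (innHt y (x k)) ^ 2) <= B * normHt2 y.

Definition FrameHt (x : nat -> nat -> nat -> R) : Prop :=
  BesselHt x /\
  exists A : R, 0 < A /\ forall y, inHt y ->
    A * normHt2 y <= Series (fun k => (innHt y (x k)) ^ 2).

Definition tildeR (x : nat -> R) : nat -> nat -> R :=
  fun n j => x n * x (n + j)%nat.

(* complex case: x~_n = (|x_n|^2, Re(conj x_n x_{n+1}), Im(conj x_n x_{n+1}),
   Re(conj x_n x_{n+2}), Im(conj x_n x_{n+2}), ...) *)
Definition tildeC (x : nat -> C) : nat -> nat -> R :=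
  fun n j => match j with
  | O => (Cmod (x n)) ^ 2
  | S j' => let z := Cmult (Cconj (x n)) (x (n + (Nat.div2 j' + 1))%nat) in
            if Nat.even j' then Re z else Im z
  end.

(* Row n of x~ is x_n times the tail (x_n, x_(n+1), ...) of x (in the complex case, conj x_n
   times the tail, with real and imaginary parts interleaved).  Hence row n of <y, x~_k> equals
   x_k(n) <w_n, x_k> (resp. Re (x_k(n) <w_n, x_k>)), where w_n is row n of y, shifted by n places
   (and packed into complex pairs) so that |w_n| = |y_n|.  Cauchy-Schwarz in n and |x_k|^2 <= B
   give |<y, x~_k>|^2 <= B sum_n |<w_n, x_k>|^2; summing over k, the Bessel bound applied to each
   w_n yields the bound B^2 |y|^2.

   The family is not a frame: for the unit vectors e_(0,j) of H~, <e_(0,j), x~_k> is x_k(0) x_k(j)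
   (the real part of conj x_k(0) x_k(j)), so summing a lower frame bound A over M + 1 columns j
   gives (M + 1) A <= sum_k |x_k(0)|^2 |x_k|^2 <= B^2 for every M. *)

From Stdlib Require Import Reals Lra Lia.
From Coquelicot Require Import Coquelicot.
Open Scope R_scope.

(** * Series of nonnegative terms *)

Lemma is_series_iff_lim_partial_sums (a : nat -> R) (l : R) :
  is_series a l <-> is_lim_seq (fun N => sum_f_R0 a N) l.
Proof. rewrite is_series_Reals, is_lim_seq_Reals. reflexivity. Qed.

Lemma sum_f_R0_nonneg_incr (a : nat -> R) :
  (forall n, 0 <= a n) -> forall N, sum_f_R0 a N <= sum_f_R0 a (S N).
Proof. intros Ha N. simpl. specialize (Ha (S N)). lra. Qed.

Lemma sum_f_R0_nonneg_le_mono (a : nat -> R) (N M : nat) :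
  (forall n, 0 <= a n) -> (N <= M)%nat -> sum_f_R0 a N <= sum_f_R0 a M.
Proof.
  intros Ha HNM. induction HNM as [|M _ IH]; [lra|].
  exact (Rle_trans _ _ _ IH (sum_f_R0_nonneg_incr a Ha M)).
Qed.

Lemma Series_nonneg_bounded (a : nat -> R) (M : R) :
  (forall n, 0 <= a n) -> (forall N, sum_f_R0 a N <= M) ->
  ex_series a /\ Series a <= M.
Proof.
  intros Ha HM.
  destruct (ex_finite_lim_seq_incr _ M (sum_f_R0_nonneg_incr a Ha) HM) as [l Hl].
  assert (Hs : is_series a l) by now apply is_series_iff_lim_partial_sums.
  split; [now exists l |].
  rewrite (is_series_unique _ _ Hs).
  exact (is_lim_seq_le _ _ _ _ HM Hl (is_lim_seq_const M)).
Qed.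

Lemma sum_le_Series_nonneg (a : nat -> R) (N : nat) :
  (forall n, 0 <= a n) -> ex_series a -> sum_f_R0 a N <= Series a.
Proof.
  intros Ha Hex. apply is_lim_seq_incr_compare; [| exact (sum_f_R0_nonneg_incr a Ha)].
  apply is_series_iff_lim_partial_sums, Series_correct, Hex.
Qed.

Lemma term_le_Series_nonneg (a : nat -> R) (n : nat) :
  (forall n, 0 <= a n) -> ex_series a -> a n <= Series a.
Proof.
  intros Ha Hex. eapply Rle_trans; [| exact (sum_le_Series_nonneg a n Ha Hex)].
  destruct n as [|n]; simpl; [lra|].
  assert (0 <= sum_f_R0 a n) by (apply cond_pos_sum; exact Ha). lra.
Qed.

Lemma Series_nonneg (a : nat -> R) :
  (forall n, 0 <= a n) -> ex_series a -> 0 <= Series a.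
Proof. intros Ha Hex. exact (Rle_trans _ _ _ (Ha 0%nat) (term_le_Series_nonneg a 0 Ha Hex)). Qed.

Lemma Series_tail_le (a : nat -> R) (n : nat) :
  (forall n, 0 <= a n) -> ex_series a -> Series (fun j => a (n + j)%nat) <= Series a.
Proof.
  intros Ha Hex. destruct n as [|n]; [right; reflexivity|].
  rewrite (Series_incr_n a (S n)) by (lia || exact Hex).
  assert (0 <= sum_f_R0 a n) by (apply cond_pos_sum; exact Ha). simpl pred. lra.
Qed.

Lemma Series_dominated (a b : nat -> R) :
  (forall n, Rabs (a n) <= b n) -> ex_series b ->
  ex_series a /\ Rabs (Series a) <= Series b.
Proof.
  intros Hab Hb.
  assert (Habs : ex_series (fun n => Rabs (a n))).
  { apply (@ex_series_le R_AbsRing R_CompleteNormedModule _ b); [| exact Hb].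
    intro n. change (Rabs (Rabs (a n)) <= b n). rewrite Rabs_Rabsolu. apply Hab. }
  split; [now apply ex_series_Rabs|].
  eapply Rle_trans; [now apply Series_Rabs|].
  apply Series_le; [| exact Hb]. intro n. split; [apply Rabs_pos | apply Hab].
Qed.

Lemma Series_sum_f_R0 (f : nat -> nat -> R) (K : nat) :
  (forall k, ex_series (f k)) ->
  ex_series (fun n => sum_f_R0 (fun k => f k n) K) /\
  Series (fun n => sum_f_R0 (fun k => f k n) K) = sum_f_R0 (fun k => Series (f k)) K.
Proof.
  intro Hf. induction K as [|K [IHex IHeq]]; simpl; [now split; [apply Hf|]|].
  split; [exact (ex_series_plus _ _ IHex (Hf (S K)))|].
  rewrite Series_plus by (exact IHex || apply Hf). now rewrite IHeq.
Qed.

Lemma sum_f_R0_scal_l (a : nat -> R) (c : R) (N : nat) :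
  sum_f_R0 (fun n => c * a n) N = c * sum_f_R0 a N.
Proof. rewrite scal_sum. apply sum_eq. intros; ring. Qed.

Lemma Series_swap_nonneg_le (a : nat -> nat -> R) (M : R) :
  (forall k n, 0 <= a k n) ->
  (forall n, ex_series (fun k => a k n)) ->
  (forall N, sum_f_R0 (fun n => Series (fun k => a k n)) N <= M) ->
  (forall k, ex_series (a k)) /\
  ex_series (fun k => Series (a k)) /\ Series (fun k => Series (a k)) <= M.
Proof.
  intros Ha Hcol HM.
  assert (Hrow : forall k, ex_series (a k)).
  { intro k. refine (proj1 (Series_nonneg_bounded _ M (Ha k) _)).
    intro N. eapply Rle_trans; [| exact (HM N)]. apply sum_Rle. intros n _.
    exact (term_le_Series_nonneg (fun k => a k n) k (fun k => Ha k n) (Hcol n)). }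
  split; [exact Hrow|].
  apply Series_nonneg_bounded; [intro k; exact (Series_nonneg _ (Ha k) (Hrow k))|].
  intro K. rewrite <- (proj2 (Series_sum_f_R0 a K Hrow)).
  apply Series_nonneg_bounded; [intro n; apply cond_pos_sum; intro k; apply Ha|].
  intro N. eapply Rle_trans; [| exact (HM N)]. apply sum_Rle. intros n _.
  exact (sum_le_Series_nonneg (fun k => a k n) K (fun k => Ha k n) (Hcol n)).
Qed.

(** * The Cauchy-Schwarz inequality for series *)

Lemma sq_le_mul_of_discriminant (A C D : R) :
  0 <= D -> (forall t, 0 <= A + 2 * t * C + t ^ 2 * D) -> C ^ 2 <= A * D.
Proof.
  intros HD Hq. destruct (Rle_lt_or_eq_dec 0 D HD) as [Dpos | <-].
  - specialize (Hq (- C / D)).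
    replace (A + 2 * (- C / D) * C + (- C / D) ^ 2 * D) with ((A * D - C ^ 2) / D) in Hq
      by (field; lra).
    apply (Rmult_le_compat_r D) in Hq; [| lra].
    unfold Rdiv in Hq. rewrite Rmult_assoc, Rinv_l, Rmult_1_r in Hq by lra. lra.
  - destruct (Req_dec C 0) as [-> | Cnz]; [lra|].
    specialize (Hq (- (A + 1) / (2 * C))).
    replace (A + 2 * (- (A + 1) / (2 * C)) * C + (- (A + 1) / (2 * C)) ^ 2 * 0) with (-1) in Hq
      by (field; exact Cnz). lra.
Qed.

Lemma ex_series_mul_of_sq (a b : nat -> R) :
  ex_series (fun n => a n ^ 2) -> ex_series (fun n => b n ^ 2) ->
  ex_series (fun n => a n * b n).
Proof.
  intros Ha Hb.
  refine (proj1 (Series_dominated _ (fun n => / 2 * a n ^ 2 + / 2 * b n ^ 2) _ _)).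
  - intro n. pose proof (pow2_ge_0 (a n - b n)). pose proof (pow2_ge_0 (a n + b n)).
    destruct (Rle_dec 0 (a n * b n));
      [rewrite Rabs_right by lra | rewrite Rabs_left by lra]; lra.
  - exact (ex_series_plus _ _ (ex_series_scal_l (/ 2) _ Ha) (ex_series_scal_l (/ 2) _ Hb)).
Qed.

Lemma Cauchy_Schwarz_Series (a b : nat -> R) :
  ex_series (fun n => a n ^ 2) -> ex_series (fun n => b n ^ 2) ->
  ex_series (fun n => a n * b n) /\
  Series (fun n => a n * b n) ^ 2
    <= Series (fun n => a n ^ 2) * Series (fun n => b n ^ 2).
Proof.
  intros Ha Hb. assert (Hab := ex_series_mul_of_sq a b Ha Hb). split; [exact Hab|].
  apply sq_le_mul_of_discriminant; [exact (Series_nonneg _ (fun n => pow2_ge_0 _) Hb)|].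
  intro t.
  assert (Hsq : ex_series (fun n => (a n + t * b n) ^ 2)).
  { refine (ex_series_ext _ _ _ (ex_series_plus _ _ (ex_series_plus _ _ Ha
      (ex_series_scal_l (2 * t) _ Hab)) (ex_series_scal_l (t ^ 2) _ Hb))).
    intro n. change (a n ^ 2 + 2 * t * (a n * b n) + t ^ 2 * b n ^ 2 = (a n + t * b n) ^ 2). ring. }
  assert (Hpos := Series_nonneg _ (fun n => pow2_ge_0 _) Hsq).
  rewrite (Series_ext _ (fun n => (a n ^ 2 + 2 * t * (a n * b n)) + t ^ 2 * b n ^ 2))
    in Hpos by (intro; ring).
  rewrite Series_plus, Series_plus, !Series_scal_l in Hpos;
    [lra | exact Ha | exact (ex_series_scal_l (2 * t) _ Hab)
    | exact (ex_series_plus _ _ Ha (ex_series_scal_l (2 * t) _ Hab))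
    | exact (ex_series_scal_l (t ^ 2) _ Hb)].
Qed.

Lemma Cauchy_Schwarz_Series_dominated (a b c : nat -> R) :
  ex_series (fun n => a n ^ 2) -> ex_series (fun n => b n ^ 2) ->
  (forall n, Rabs (c n) <= Rabs (a n * b n)) ->
  ex_series c /\
  Series c ^ 2 <= Series (fun n => a n ^ 2) * Series (fun n => b n ^ 2).
Proof.
  intros Ha Hb Hc.
  assert (Habs : forall u : nat -> R, ex_series (fun n => u n ^ 2) ->
            ex_series (fun n => Rabs (u n) ^ 2) /\
            Series (fun n => Rabs (u n) ^ 2) = Series (fun n => u n ^ 2)).
  { intros u Hu. split; [refine (ex_series_ext _ _ _ Hu) | apply Series_ext];
      intro; now rewrite pow2_abs. }
  destruct (Habs a Ha) as [Ha' Sa], (Habs b Hb) as [Hb' Sb].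
  destruct (Cauchy_Schwarz_Series _ _ Ha' Hb') as [Hab CS]. rewrite Sa, Sb in CS.
  destruct (Series_dominated c (fun n => Rabs (a n) * Rabs (b n))) as [Hcex Hcle];
    [intro n; rewrite <- Rabs_mult; apply Hc | exact Hab |].
  split; [exact Hcex|].
  eapply Rle_trans; [| exact CS]. rewrite <- pow2_abs.
  apply pow_incr. split; [apply Rabs_pos | exact Hcle].
Qed.

(* Used with c k n = row n of <y, x~_k>, a k n = |x_k(n)|, V k n = |<w_n, x_k>| and
   W n = |y_n|^2, where w_n is row n of y moved into l2. *)
Lemma Series_sq_le_of_rows (B : R) (W : nat -> R) (a V c : nat -> nat -> R) :
  0 <= B -> (forall n, 0 <= W n) -> ex_series W ->
  (forall n, ex_series (fun k => V k n ^ 2) /\ Series (fun k => V k n ^ 2) <= B * W n) ->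
  (forall k, ex_series (fun n => a k n ^ 2) /\ Series (fun n => a k n ^ 2) <= B) ->
  (forall k n, Rabs (c k n) <= Rabs (a k n * V k n)) ->
  ex_series (fun k => Series (c k) ^ 2) /\
  Series (fun k => Series (c k) ^ 2) <= B * B * Series W.
Proof.
  intros HB HW HWex HV Ha Hc.
  destruct (Series_swap_nonneg_le (fun k n => V k n ^ 2) (B * Series W)) as [Vrow [Vex Vle]].
  - intros; apply pow2_ge_0.
  - intro n; apply HV.
  - intro N. eapply Rle_trans.
    + apply (sum_Rle _ (fun n => B * W n)). intros n _. apply HV.
    + rewrite sum_f_R0_scal_l. apply Rmult_le_compat_l; [exact HB|].
      exact (sum_le_Series_nonneg W N HW HWex).
  - assert (Hck : forall k, Series (c k) ^ 2 <= B * Series (fun n => V k n ^ 2)).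
    { intro k. destruct (Ha k) as [Haex Hale].
      destruct (Cauchy_Schwarz_Series_dominated _ _ _ Haex (Vrow k) (Hc k)) as [_ CS].
      eapply Rle_trans; [exact CS|]. apply Rmult_le_compat_r; [| exact Hale].
      exact (Series_nonneg _ (fun n => pow2_ge_0 _) (Vrow k)). }
    destruct (Series_dominated (fun k => Series (c k) ^ 2)
                (fun k => B * Series (fun n => V k n ^ 2))) as [Tex Tle].
    + intro k. rewrite Rabs_right by apply Rle_ge, pow2_ge_0. apply Hck.
    + exact (ex_series_scal_l B _ Vex).
    + split; [exact Tex|]. rewrite Series_scal_l, Rabs_right in Tle by apply Rle_ge,
        (Series_nonneg _ (fun k => pow2_ge_0 _) Tex).
      rewrite Rmult_assoc. eapply Rle_trans; [exact Tle|].
      apply Rmult_le_compat_l; [exact HB | exact Vle].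
Qed.

Lemma inHt_of_rows (u : nat -> nat -> R) (a : nat -> R) (C : R) :
  ex_series a ->
  (forall n, ex_series (fun j => u n j ^ 2) /\ Series (fun j => u n j ^ 2) <= C * a n) ->
  inHt u.
Proof.
  intros Ha Hrow. split; [intro n; apply Hrow|].
  refine (proj1 (Series_dominated _ _ _ (ex_series_scal_l C _ Ha))). intro n.
  rewrite Rabs_right by apply Rle_ge, (Series_nonneg _ (fun j => pow2_ge_0 _)), Hrow.
  apply Hrow.
Qed.

Definition shift_seq {A : Type} (z : A) (n : nat) (v : nat -> A) : nat -> A :=
  fun i => if (i <? n)%nat then z else v (i - n)%nat.

Lemma shift_seq_lt {A : Type} (z : A) (n : nat) (v : nat -> A) (i : nat) :
  (i < n)%nat -> shift_seq z n v i = z.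
Proof. intro Hi. unfold shift_seq. destruct (Nat.ltb_spec i n); [reflexivity | lia]. Qed.

Lemma shift_seq_add {A : Type} (z : A) (n : nat) (v : nat -> A) (j : nat) :
  shift_seq z n v (n + j) = v j.
Proof.
  unfold shift_seq. destruct (Nat.ltb_spec (n + j) n); [lia|]. f_equal. lia.
Qed.

Definition kron (j0 j : nat) : R := if Nat.eqb j j0 then 1 else 0.

Lemma kron_same (j0 : nat) : kron j0 j0 = 1.
Proof. unfold kron. now rewrite Nat.eqb_refl. Qed.

Lemma kron_other (j0 j : nat) : j <> j0 -> kron j0 j = 0.
Proof. intro H. unfold kron. now destruct (Nat.eqb_spec j j0). Qed.

Lemma sum_f_R0_kron_mul (j0 : nat) (v : nat -> R) (N : nat) :
  sum_f_R0 (fun j => kron j0 j * v j) N = if (N <? j0)%nat then 0 else v j0.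
Proof.
  induction N as [|N IH]; simpl.
  - destruct (Nat.ltb_spec 0 j0).
    + rewrite kron_other by lia. ring.
    + replace j0 with 0%nat by lia. rewrite kron_same. ring.
  - rewrite IH. destruct (Nat.ltb_spec N j0), (Nat.ltb_spec (S N) j0); try lia.
    + rewrite kron_other by lia. ring.
    + replace j0 with (S N) by lia. rewrite kron_same. ring.
    + rewrite kron_other by lia. ring.
Qed.

Lemma Series_kron_mul (j0 : nat) (v : nat -> R) :
  ex_series (fun j => kron j0 j * v j) /\ Series (fun j => kron j0 j * v j) = v j0.
Proof.
  assert (Hs : is_series (fun j => kron j0 j * v j) (v j0)).
  { apply is_series_iff_lim_partial_sums, (is_lim_seq_incr_n _ j0).
    apply (is_lim_seq_ext (fun _ => v j0)); [| apply is_lim_seq_const].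
    intro n. rewrite sum_f_R0_kron_mul. destruct (Nat.ltb_spec (n + j0) j0); [lia | reflexivity]. }
  split; [now exists (v j0) | exact (is_series_unique _ _ Hs)].
Qed.

Definition unitHt (i0 j0 : nat) : nat -> nat -> R := fun i j => kron i0 i * kron j0 j.

Lemma Series_unitHt_mul (i0 j0 : nat) (v : nat -> nat -> R) :
  (forall i, ex_series (fun j => unitHt i0 j0 i j * v i j)) /\
  ex_series (fun i => Series (fun j => unitHt i0 j0 i j * v i j)) /\
  Series (fun i => Series (fun j => unitHt i0 j0 i j * v i j)) = v i0 j0.
Proof.
  assert (Hrow : forall i, ex_series (fun j => unitHt i0 j0 i j * v i j) /\
                   Series (fun j => unitHt i0 j0 i j * v i j) = kron i0 i * v i j0).
  { intro i. unfold unitHt.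
    destruct (Series_kron_mul j0 (fun j => kron i0 i * v i j)) as [Hex Heq].
    split; [refine (ex_series_ext _ _ _ Hex) | rewrite <- Heq; apply Series_ext].
    - intro n. cbn. ring.
    - intro n. ring. }
  destruct (Series_kron_mul i0 (fun i => v i j0)) as [Hex Heq].
  split; [intro i; apply Hrow|].
  rewrite (Series_ext _ _ (fun i => proj2 (Hrow i))).
  split; [refine (ex_series_ext _ _ _ Hex); intro i; now rewrite (proj2 (Hrow i)) | exact Heq].
Qed.

Lemma unitHt_normalized (i0 j0 : nat) : inHt (unitHt i0 j0) /\ normHt2 (unitHt i0 j0) = 1.
Proof.
  destruct (Series_unitHt_mul i0 j0 (unitHt i0 j0)) as [Hrow [Hex Hnorm]].
  assert (Hsq : forall i, Series (fun j => unitHt i0 j0 i j ^ 2)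
                          = Series (fun j => unitHt i0 j0 i j * unitHt i0 j0 i j))
    by (intro i; apply Series_ext; intro j; ring).
  split; [split|].
  - intro i. refine (ex_series_ext _ _ _ (Hrow i)). intro j. cbn. ring.
  - refine (ex_series_ext _ _ _ Hex). intro i. now rewrite Hsq.
  - unfold normHt2. rewrite (Series_ext _ _ Hsq), Hnorm. unfold unitHt. rewrite !kron_same. ring.
Qed.

Lemma innHt_unitHt (i0 j0 : nat) (v : nat -> nat -> R) : innHt (unitHt i0 j0) v = v i0 j0.
Proof. exact (proj2 (proj2 (Series_unitHt_mul i0 j0 v))). Qed.

Lemma not_FrameHt_of_row0 (u : nat -> nat -> nat -> R) (col : nat -> nat) (s : nat -> R) (B : R) :
  0 <= B -> (forall k, 0 <= s k) -> ex_series s -> Series s <= B ->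
  (forall k M, sum_f_R0 (fun m => u k 0%nat (col m) ^ 2) M <= B * s k) ->
  ~ FrameHt u.
Proof.
  intros HB Hs Hsex HsB Hrow [[_ [B' HB']] [A [HA Hlow]]].
  assert (Hcol : forall m, ex_series (fun k => u k 0%nat (col m) ^ 2) /\
                           A <= Series (fun k => u k 0%nat (col m) ^ 2)).
  { intro m. destruct (unitHt_normalized 0 (col m)) as [Hin Hnorm].
    assert (He : forall k, innHt (unitHt 0 (col m)) (u k) = u k 0%nat (col m))
      by (intro k; apply innHt_unitHt).
    split.
    - refine (ex_series_ext _ _ _ (proj1 (HB' _ Hin))). intro k. now rewrite He.
    - specialize (Hlow _ Hin). rewrite Hnorm, Rmult_1_r in Hlow.
      rewrite (Series_ext _ _ (fun k => f_equal (fun r => r ^ 2) (He k))) in Hlow. exact Hlow. }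
  destruct (INR_archimed A (B * B) HA) as [M HM].
  assert (Hsum : sum_f_R0 (fun _ => A) M
                 <= Series (fun k => sum_f_R0 (fun m => u k 0%nat (col m) ^ 2) M)).
  { rewrite (proj2 (Series_sum_f_R0 (fun m k => u k 0%nat (col m) ^ 2) M (fun m => proj1 (Hcol m)))).
    apply sum_Rle. intros m _. apply Hcol. }
  assert (Hup : Series (fun k => sum_f_R0 (fun m => u k 0%nat (col m) ^ 2) M) <= B * B).
  { eapply Rle_trans; [apply (Series_le _ (fun k => B * s k)) | rewrite Series_scal_l].
    - intro k. split; [apply cond_pos_sum; intro; apply pow2_ge_0 | apply Hrow].
    - exact (ex_series_scal_l B _ Hsex).
    - now apply Rmult_le_compat_l. }
  rewrite sum_cte, S_INR in Hsum. lra.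
Qed.

(** * The real case *)

Definition bessel_boundR (x : nat -> nat -> R) (B : R) : Prop :=
  forall y, l2R y -> ex_series (fun k => innR y (x k) ^ 2) /\
    Series (fun k => innR y (x k) ^ 2) <= B * normR2 y.

Lemma normR2_nonneg (y : nat -> R) : l2R y -> 0 <= normR2 y.
Proof. exact (Series_nonneg _ (fun i => pow2_ge_0 _)). Qed.

Lemma BesselR_nonneg_bound (x : nat -> nat -> R) :
  BesselR x -> exists B, 0 <= B /\ bessel_boundR x B.
Proof.
  intros [_ [B HB]]. exists (Rmax B 0). split; [apply Rmax_r|].
  intros y Hy. destruct (HB y Hy) as [Hex Hle]. split; [exact Hex|].
  eapply Rle_trans; [exact Hle|].
  apply Rmult_le_compat_r; [exact (normR2_nonneg y Hy) | apply Rmax_l].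
Qed.

Lemma le_of_sq_le_mul (N B : R) : 0 <= N -> 0 <= B -> N ^ 2 <= B * N -> N <= B.
Proof. intros HN HB H. destruct (Rle_lt_dec N B); [assumption | nra]. Qed.

Lemma normR2_le_bessel_bound (x : nat -> nat -> R) (B : R) (k : nat) :
  l2R (x k) -> 0 <= B -> bessel_boundR x B -> normR2 (x k) <= B.
Proof.
  intros Hxk HB Hx. apply le_of_sq_le_mul; [exact (normR2_nonneg _ Hxk) | exact HB|].
  destruct (Hx (x k) Hxk) as [Hex Hle]. eapply Rle_trans; [| exact Hle].
  replace (normR2 (x k)) with (innR (x k) (x k))
    by (apply Series_ext; intro; ring).
  exact (term_le_Series_nonneg (fun k' => innR (x k) (x k') ^ 2) k (fun _ => pow2_ge_0 _) Hex).
Qed.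

Lemma tildeR_row (x : nat -> R) (n : nat) :
  l2R x ->
  ex_series (fun j => tildeR x n j ^ 2) /\ Series (fun j => tildeR x n j ^ 2) <= normR2 x * x n ^ 2.
Proof.
  intro Hx. unfold tildeR.
  assert (Htail := proj1 (ex_series_incr_n (fun i => x i ^ 2) n) Hx).
  split.
  - refine (ex_series_ext _ _ _ (ex_series_scal_l (x n ^ 2) _ Htail)). intro j. cbn. ring.
  - rewrite (Series_ext _ (fun j => x n ^ 2 * x (n + j)%nat ^ 2)) by (intro; ring).
    rewrite Series_scal_l, Rmult_comm. apply Rmult_le_compat_r; [apply pow2_ge_0|].
    exact (Series_tail_le (fun i => x i ^ 2) n (fun _ => pow2_ge_0 _) Hx).
Qed.

Lemma tildeR_inHt (x : nat -> R) : l2R x -> inHt (tildeR x).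
Proof. intro Hx. exact (inHt_of_rows _ _ _ Hx (fun n => tildeR_row x n Hx)). Qed.

Lemma shift_seq_normR2 (v : nat -> R) (n : nat) :
  l2R v -> l2R (shift_seq 0 n v) /\ normR2 (shift_seq 0 n v) = normR2 v.
Proof.
  intro Hv.
  assert (Hlow : forall i, (i < n)%nat -> shift_seq 0 n v i ^ 2 = 0)
    by (intros i Hi; rewrite shift_seq_lt by exact Hi; ring).
  split.
  - apply (ex_series_incr_n _ n). refine (ex_series_ext _ _ _ Hv).
    intro j. now rewrite shift_seq_add.
  - unfold normR2. rewrite (Series_incr_n_aux _ n Hlow).
    apply Series_ext. intro j. now rewrite shift_seq_add.
Qed.

Lemma tildeR_row_inner (v x : nat -> R) (n : nat) :
  Series (fun j => v j * tildeR x n j) = x n * innR (shift_seq 0 n v) x.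
Proof.
  unfold innR. rewrite (Series_incr_n_aux (fun i => shift_seq 0 n v i * x i) n)
    by (intros i Hi; rewrite shift_seq_lt by exact Hi; ring).
  rewrite <- Series_scal_l. apply Series_ext. intro j. cbv beta.
  rewrite shift_seq_add. unfold tildeR. ring.
Qed.

Lemma kron_normalized (j0 : nat) : l2R (kron j0) /\ normR2 (kron j0) = 1.
Proof.
  destruct (Series_kron_mul j0 (kron j0)) as [Hex Heq]. rewrite kron_same in Heq.
  split; [refine (ex_series_ext _ _ _ Hex) | unfold normR2; rewrite <- Heq; apply Series_ext];
    intro j; cbn; ring.
Qed.

Lemma tildeR_BesselHt (x : nat -> nat -> R) (B : R) :
  (forall k, l2R (x k)) -> 0 <= B -> bessel_boundR x B ->
  BesselHt (fun k => tildeR (x k)).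
Proof.
  intros Hx HB Hbound. split; [intro k; exact (tildeR_inHt _ (Hx k))|].
  exists (B * B). intros y [Hy Hyex].
  apply (Series_sq_le_of_rows B (fun n => Series (fun j => y n j ^ 2))
           (fun k n => x k n) (fun k n => innR (shift_seq 0 n (y n)) (x k))).
  - exact HB.
  - intro n. exact (Series_nonneg _ (fun j => pow2_ge_0 _) (Hy n)).
  - exact Hyex.
  - intro n. destruct (shift_seq_normR2 (y n) n (Hy n)) as [Hl2 Hnorm].
    change (Series (fun j => y n j ^ 2)) with (normR2 (y n)).
    rewrite <- Hnorm. exact (Hbound _ Hl2).
  - intro k. exact (conj (Hx k) (normR2_le_bessel_bound x B k (Hx k) HB Hbound)).
  - intros k n. rewrite tildeR_row_inner. apply Rle_refl.
Qed.

Lemma tildeR_not_FrameHt (x : nat -> nat -> R) (B : R) :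
  (forall k, l2R (x k)) -> 0 <= B -> bessel_boundR x B ->
  ~ FrameHt (fun k => tildeR (x k)).
Proof.
  intros Hx HB Hbound.
  destruct (kron_normalized 0) as [Hl2 Hnorm].
  destruct (Hbound (kron 0) Hl2) as [Hex Hle].
  assert (Hinn : forall k, innR (kron 0) (x k) = x k 0%nat)
    by (intro k; apply Series_kron_mul).
  apply (not_FrameHt_of_row0 _ (fun m => m) (fun k => x k 0%nat ^ 2) B HB).
  - intro k. apply pow2_ge_0.
  - refine (ex_series_ext _ _ _ Hex). intro k. now rewrite Hinn.
  - rewrite (Series_ext _ _ (fun k => f_equal (fun r => r ^ 2) (Hinn k))), Hnorm in Hle. lra.
  - intros k M. unfold tildeR.
    rewrite (sum_eq _ (fun m => x k 0%nat ^ 2 * x k m ^ 2))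
      by (intros m _; change (0 + m)%nat with m; ring).
    rewrite sum_f_R0_scal_l, (Rmult_comm B). apply Rmult_le_compat_l; [apply pow2_ge_0|].
    eapply Rle_trans; [| exact (normR2_le_bessel_bound x B k (Hx k) HB Hbound)].
    exact (sum_le_Series_nonneg _ M (fun _ => pow2_ge_0 _) (Hx k)).
Qed.

(** * The complex case *)

Lemma im_le_Cmod (z : C) : Rabs (Im z) <= Cmod z.
Proof. exact (Rle_trans _ _ _ (Rmax_r _ _) (proj1 (sqrt_plus_sqr (fst z) (snd z)))). Qed.

Lemma Cmod_Cmult_Cconj (a b : C) : Cmod (Cmult (Cconj a) b) = Cmod a * Cmod b.
Proof. now rewrite Cmod_mult, Cmod_conj. Qed.

Definition pair_sum (f : nat -> R) (m : nat) : R := f (S (2 * m)) + f (S (S (2 * m))).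

Lemma sum_f_R0_pair_sum (f : nat -> R) (M : nat) :
  sum_f_R0 (pair_sum f) M = sum_f_R0 f (S (S (2 * M))) - f 0%nat.
Proof.
  unfold pair_sum. induction M as [|M IH]; [simpl; ring|].
  rewrite tech5, IH. replace (2 * S M)%nat with (S (S (2 * M))) by lia.
  rewrite !tech5. ring.
Qed.

Lemma Series_pair_sum (f : nat -> R) :
  ex_series f -> ex_series (pair_sum f) /\ Series f = f 0%nat + Series (pair_sum f).
Proof.
  intro Hf.
  assert (Hs : is_series (pair_sum f) (Series f - f 0%nat)).
  { apply is_series_iff_lim_partial_sums.
    apply (is_lim_seq_ext (fun M => sum_f_R0 f (S (S (2 * M))) + - f 0%nat));
      [intro M; rewrite sum_f_R0_pair_sum; ring|].
    apply is_lim_seq_plus'; [| apply is_lim_seq_const].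
    apply (is_lim_seq_subseq _ _ (fun M => S (S (2 * M)))).
    - apply eventually_subseq. intro; lia.
    - apply is_series_iff_lim_partial_sums, Series_correct, Hf. }
  split; [exact (ex_intro _ _ Hs)|]. rewrite (is_series_unique _ _ Hs). ring.
Qed.

Lemma ex_series_of_pair_sum_nonneg (f : nat -> R) :
  (forall j, 0 <= f j) -> ex_series (pair_sum f) -> ex_series f.
Proof.
  intros Hf Hp.
  refine (proj1 (Series_nonneg_bounded f (f 0%nat + Series (pair_sum f)) Hf _)).
  intro N.
  assert (Hpart := sum_le_Series_nonneg (pair_sum f) N
                     (fun m => Rplus_le_le_0_compat _ _ (Hf _) (Hf _)) Hp).
  rewrite sum_f_R0_pair_sum in Hpart.
  assert (sum_f_R0 f N <= sum_f_R0 f (S (S (2 * N))))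
    by (apply sum_f_R0_nonneg_le_mono; [exact Hf | lia]).
  lra.
Qed.

Lemma tildeC_odd (x : nat -> C) (n m : nat) :
  tildeC x n (S (2 * m)) = Re (Cmult (Cconj (x n)) (x (n + S m)%nat)).
Proof.
  unfold tildeC. rewrite Nat.even_even, Nat.div2_double.
  now replace (n + (m + 1))%nat with (n + S m)%nat by lia.
Qed.

Lemma tildeC_even (x : nat -> C) (n m : nat) :
  tildeC x n (S (S (2 * m))) = Im (Cmult (Cconj (x n)) (x (n + S m)%nat)).
Proof.
  unfold tildeC. rewrite Nat.even_succ, Nat.odd_even, Nat.div2_succ_double.
  now replace (n + (m + 1))%nat with (n + S m)%nat by lia.
Qed.

Lemma pair_sum_tildeC_sq (x : nat -> C) (n m : nat) :
  pair_sum (fun j => tildeC x n j ^ 2) m = Cmod (x n) ^ 2 * Cmod (x (n + S m)%nat) ^ 2.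
Proof.
  unfold pair_sum. rewrite tildeC_odd, tildeC_even, <- Rpow_mult_distr,
    <- Cmod_Cmult_Cconj, Cmod2_alt. reflexivity.
Qed.

Lemma tildeC_row (x : nat -> C) (n : nat) :
  l2C x ->
  ex_series (fun j => tildeC x n j ^ 2) /\
  Series (fun j => tildeC x n j ^ 2) <= 2 * normC2 x * Cmod (x n) ^ 2.
Proof.
  intro Hx.
  assert (Htail : ex_series (fun m => Cmod (x (n + S m)%nat) ^ 2)).
  { refine (ex_series_ext _ _ _ (proj1 (ex_series_incr_n _ (S n)) Hx)).
    intro m. now rewrite <- plus_n_Sm. }
  assert (Hpairs : ex_series (pair_sum (fun j => tildeC x n j ^ 2))).
  { refine (ex_series_ext _ _ _ (ex_series_scal_l (Cmod (x n) ^ 2) _ Htail)).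
    intro m. now rewrite pair_sum_tildeC_sq. }
  assert (Hrow := ex_series_of_pair_sum_nonneg _ (fun j => pow2_ge_0 _) Hpairs).
  split; [exact Hrow|].
  rewrite (proj2 (Series_pair_sum _ Hrow)), (Series_ext _ _ (pair_sum_tildeC_sq x n)),
    Series_scal_l.
  assert (Hxn := term_le_Series_nonneg _ n (fun _ => pow2_ge_0 _) Hx).
  assert (Htail_le : Series (fun m => Cmod (x (n + S m)%nat) ^ 2) <= normC2 x).
  { rewrite (Series_ext _ (fun m => Cmod (x (S n + m)%nat) ^ 2))
      by (intro m; now rewrite <- plus_n_Sm).
    exact (Series_tail_le _ (S n) (fun _ => pow2_ge_0 _) Hx). }
  change (tildeC x n 0) with (Cmod (x n) ^ 2).
  assert (0 <= Cmod (x n) ^ 2) by apply pow2_ge_0. unfold normC2 in *. nra.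
Qed.

Lemma tildeC_inHt (x : nat -> C) : l2C x -> inHt (tildeC x).
Proof. intro Hx. exact (inHt_of_rows _ _ _ Hx (fun n => tildeC_row x n Hx)). Qed.

(* Undoes the layout of tildeC: coordinate 0, then (real part, imaginary part) pairs. *)
Definition pack_pairs (v : nat -> R) : nat -> C :=
  fun i => match i with
           | O => (v O, 0)
           | S m => (v (S (2 * m)), v (S (S (2 * m))))
           end.

Lemma pack_pairs_normC2 (v : nat -> R) :
  l2R v -> l2C (pack_pairs v) /\ normC2 (pack_pairs v) = normR2 v.
Proof.
  intro Hv. destruct (Series_pair_sum _ Hv) as [Hpairs Hsplit].
  assert (Hsq : forall m, Cmod (pack_pairs v (S m)) ^ 2 = pair_sum (fun j => v j ^ 2) m)
    by (intro m; now rewrite Cmod2_alt).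
  assert (Htail : ex_series (fun m => Cmod (pack_pairs v (S m)) ^ 2))
    by (refine (ex_series_ext _ _ _ Hpairs); intro m; now rewrite Hsq).
  split; [exact (proj2 (ex_series_incr_1 _) Htail)|].
  unfold normC2, normR2. rewrite Series_incr_1 by exact (proj2 (ex_series_incr_1 _) Htail).
  rewrite Hsplit, (Series_ext _ _ Hsq), Cmod2_alt. simpl. ring.
Qed.

Lemma shift_seq_normC2 (w : nat -> C) (n : nat) :
  l2C w -> l2C (shift_seq (0, 0) n w) /\ normC2 (shift_seq (0, 0) n w) = normC2 w.
Proof.
  intro Hw.
  assert (Hlow : forall i, (i < n)%nat -> Cmod (shift_seq (0, 0) n w i) ^ 2 = 0)
    by (intros i Hi; rewrite shift_seq_lt, Cmod2_alt by exact Hi; simpl; ring).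
  split.
  - apply (ex_series_incr_n _ n). refine (ex_series_ext _ _ _ Hw).
    intro j. now rewrite shift_seq_add.
  - unfold normC2. rewrite (Series_incr_n_aux _ n Hlow).
    apply Series_ext. intro j. now rewrite shift_seq_add.
Qed.

Definition embed_rowC (v : nat -> R) (n : nat) : nat -> C := shift_seq (0, 0) n (pack_pairs v).

Lemma embed_rowC_normC2 (v : nat -> R) (n : nat) :
  l2R v -> l2C (embed_rowC v n) /\ normC2 (embed_rowC v n) = normR2 v.
Proof.
  intro Hv. destruct (pack_pairs_normC2 v Hv) as [Hl2 Hnorm].
  destruct (shift_seq_normC2 _ n Hl2) as [Hl2' Hnorm'].
  split; [exact Hl2' | unfold embed_rowC; now rewrite Hnorm', Hnorm].
Qed.

Lemma ex_series_Re_Im_innC (w x : nat -> C) :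
  l2C w -> l2C x ->
  ex_series (fun i => Re (Cmult (w i) (Cconj (x i)))) /\
  ex_series (fun i => Im (Cmult (w i) (Cconj (x i)))).
Proof.
  intros Hw Hx.
  assert (Hprod := ex_series_mul_of_sq (fun i => Cmod (w i)) (fun i => Cmod (x i)) Hw Hx).
  assert (Hmod : forall i, Cmod (Cmult (w i) (Cconj (x i))) = Cmod (w i) * Cmod (x i))
    by (intro i; now rewrite Cmod_mult, Cmod_conj).
  split; refine (proj1 (Series_dominated _ _ _ Hprod)); intro i; rewrite <- Hmod;
    [apply re_le_Cmod | apply im_le_Cmod].
Qed.

Lemma Re_Cmult_Series (a : C) (z : nat -> C) :
  ex_series (fun i => Re (z i)) -> ex_series (fun i => Im (z i)) ->
  ex_series (fun i => Re (Cmult a (z i))) /\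
  Re (Cmult a (Series (fun i => Re (z i)), Series (fun i => Im (z i))))
    = Series (fun i => Re (Cmult a (z i))).
Proof.
  intros HRe HIm.
  assert (Hlin : forall i, Re (Cmult a (z i)) = fst a * Re (z i) - snd a * Im (z i))
    by reflexivity.
  split.
  - refine (ex_series_ext _ _ _ (ex_series_minus _ _ (ex_series_scal_l (fst a) _ HRe)
                                                 (ex_series_scal_l (snd a) _ HIm))).
    intro i. now rewrite Hlin.
  - rewrite (Series_ext _ _ Hlin), Series_minus, !Series_scal_l;
      [reflexivity | exact (ex_series_scal_l (fst a) _ HRe) | exact (ex_series_scal_l (snd a) _ HIm)].
Qed.

Lemma tildeC_row_inner (v : nat -> R) (x : nat -> C) (n : nat) :
  l2R v -> l2C x ->
  Series (fun j => v j * tildeC x n j) = Re (Cmult (x n) (innC (embed_rowC v n) x)).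
Proof.
  intros Hv Hx.
  destruct (ex_series_Re_Im_innC (embed_rowC v n) x (proj1 (embed_rowC_normC2 v n Hv)) Hx)
    as [HRe HIm].
  destruct (Re_Cmult_Series (x n) _ HRe HIm) as [Hex Heq].
  unfold innC. rewrite Heq.
  set (h := fun i => Re (Cmult (x n) (Cmult (embed_rowC v n i) (Cconj (x i))))).
  rewrite (Series_incr_n_aux h n)
    by (intros i Hi; unfold h, embed_rowC; rewrite shift_seq_lt by exact Hi; simpl; ring).
  rewrite (Series_incr_1 (fun k => h (n + k)%nat)) by exact (proj1 (ex_series_incr_n h n) Hex).
  assert (Hvt := ex_series_mul_of_sq _ _ Hv (proj1 (tildeC_row x n Hx))).
  rewrite (proj2 (Series_pair_sum _ Hvt)). unfold h, embed_rowC. f_equal.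
  - rewrite shift_seq_add, Nat.add_0_r. change (tildeC x n 0) with (Cmod (x n) ^ 2).
    rewrite Cmod2_alt. unfold Re, Im. simpl. ring.
  - apply Series_ext. intro m. unfold pair_sum.
    rewrite tildeC_odd, tildeC_even, shift_seq_add. unfold Re, Im. simpl. ring.
Qed.

Definition bessel_boundC (x : nat -> nat -> C) (B : R) : Prop :=
  forall y, l2C y -> ex_series (fun k => Cmod (innC y (x k)) ^ 2) /\
    Series (fun k => Cmod (innC y (x k)) ^ 2) <= B * normC2 y.

Lemma normC2_nonneg (y : nat -> C) : l2C y -> 0 <= normC2 y.
Proof. exact (Series_nonneg _ (fun i => pow2_ge_0 _)). Qed.

Lemma BesselC_nonneg_bound (x : nat -> nat -> C) :
  BesselC x -> exists B, 0 <= B /\ bessel_boundC x B.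
Proof.
  intros [_ [B HB]]. exists (Rmax B 0). split; [apply Rmax_r|].
  intros y Hy. destruct (HB y Hy) as [Hex Hle]. split; [exact Hex|].
  eapply Rle_trans; [exact Hle|].
  apply Rmult_le_compat_r; [exact (normC2_nonneg y Hy) | apply Rmax_l].
Qed.

Lemma Cmod_innC_self_sq (z : nat -> C) : Cmod (innC z z) ^ 2 = normC2 z ^ 2.
Proof.
  assert (Hre : Series (fun i => Re (Cmult (z i) (Cconj (z i)))) = normC2 z)
    by (apply Series_ext; intro i; rewrite Cmod2_alt; unfold Re, Im; simpl; ring).
  assert (Him : Series (fun i => Im (Cmult (z i) (Cconj (z i)))) = 0).
  { rewrite (Series_ext _ (fun i => 0 * 0)) by (intro i; unfold Im; simpl; ring).
    rewrite Series_scal_l. ring. }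
  unfold innC. rewrite Hre, Him. change (normC2 z, 0) with (RtoC (normC2 z)).
  now rewrite Cmod_R, pow2_abs.
Qed.

Lemma normC2_le_bessel_bound (x : nat -> nat -> C) (B : R) (k : nat) :
  l2C (x k) -> 0 <= B -> bessel_boundC x B -> normC2 (x k) <= B.
Proof.
  intros Hxk HB Hx. apply le_of_sq_le_mul; [exact (normC2_nonneg _ Hxk) | exact HB|].
  destruct (Hx (x k) Hxk) as [Hex Hle]. eapply Rle_trans; [| exact Hle].
  rewrite <- Cmod_innC_self_sq.
  exact (term_le_Series_nonneg (fun k' => Cmod (innC (x k) (x k')) ^ 2) k
           (fun _ => pow2_ge_0 _) Hex).
Qed.

Definition kronC (j0 j : nat) : C := RtoC (kron j0 j).

Lemma kronC_normalized (j0 : nat) : l2C (kronC j0) /\ normC2 (kronC j0) = 1.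
Proof.
  assert (Hsq : forall j, Cmod (kronC j0 j) ^ 2 = kron j0 j * kron j0 j)
    by (intro j; rewrite Cmod2_alt; unfold Re, Im; simpl; ring).
  destruct (Series_kron_mul j0 (kron j0)) as [Hex Hnorm]. rewrite kron_same in Hnorm.
  split.
  - refine (ex_series_ext _ _ _ Hex). intro j. now rewrite Hsq.
  - unfold normC2. now rewrite (Series_ext _ _ Hsq).
Qed.

Lemma innC_kronC (j0 : nat) (x : nat -> C) : innC (kronC j0) x = Cconj (x j0).
Proof.
  unfold innC, Cconj.
  rewrite (Series_ext _ (fun i => kron j0 i * fst (x i))) by (intro; unfold Re; simpl; ring).
  rewrite (Series_ext (fun i => Im _) (fun i => kron j0 i * - snd (x i)))
    by (intro; unfold Im; simpl; ring).
  now rewrite (proj2 (Series_kron_mul j0 _)), (proj2 (Series_kron_mul j0 _)).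
Qed.

Lemma tildeC_BesselHt (x : nat -> nat -> C) (B : R) :
  (forall k, l2C (x k)) -> 0 <= B -> bessel_boundC x B ->
  BesselHt (fun k => tildeC (x k)).
Proof.
  intros Hx HB Hbound. split; [intro k; exact (tildeC_inHt _ (Hx k))|].
  exists (B * B). intros y [Hy Hyex].
  apply (Series_sq_le_of_rows B (fun n => Series (fun j => y n j ^ 2))
           (fun k n => Cmod (x k n)) (fun k n => Cmod (innC (embed_rowC (y n) n) (x k)))).
  - exact HB.
  - intro n. exact (Series_nonneg _ (fun j => pow2_ge_0 _) (Hy n)).
  - exact Hyex.
  - intro n. destruct (embed_rowC_normC2 (y n) n (Hy n)) as [Hl2 Hnorm].
    change (Series (fun j => y n j ^ 2)) with (normR2 (y n)).
    rewrite <- Hnorm. exact (Hbound _ Hl2).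
  - intro k. exact (conj (Hx k) (normC2_le_bessel_bound x B k (Hx k) HB Hbound)).
  - intros k n. rewrite tildeC_row_inner by (exact (Hy n) || exact (Hx k)).
    rewrite (Rabs_pos_eq (Cmod _ * Cmod _)) by (apply Rmult_le_pos; apply Cmod_ge_0).
    rewrite <- Cmod_mult. apply re_le_Cmod.
Qed.

Lemma tildeC_not_FrameHt (x : nat -> nat -> C) (B : R) :
  (forall k, l2C (x k)) -> 0 <= B -> bessel_boundC x B ->
  ~ FrameHt (fun k => tildeC (x k)).
Proof.
  intros Hx HB Hbound.
  destruct (kronC_normalized 0) as [Hl2 Hnorm].
  destruct (Hbound _ Hl2) as [Hex Hle].
  assert (Hinn : forall k, Cmod (innC (kronC 0) (x k)) = Cmod (x k 0%nat))
    by (intro k; now rewrite innC_kronC, Cmod_conj).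
  apply (not_FrameHt_of_row0 _ (fun m => S (2 * m)) (fun k => Cmod (x k 0%nat) ^ 2) B HB).
  - intro k. apply pow2_ge_0.
  - refine (ex_series_ext _ _ _ Hex). intro k. now rewrite Hinn.
  - rewrite (Series_ext _ _ (fun k => f_equal (fun r => r ^ 2) (Hinn k))), Hnorm in Hle. lra.
  - intros k M. eapply Rle_trans.
    + apply (sum_Rle _ (fun m => Cmod (x k 0%nat) ^ 2 * Cmod (x k (S m)) ^ 2)). intros m _.
      rewrite tildeC_odd, <- Rpow_mult_distr, <- Cmod_Cmult_Cconj, (Cmod2_alt (Cmult _ _)).
      change (0 + S m)%nat with (S m).
      pose proof (pow2_ge_0 (Im (Cmult (Cconj (x k 0%nat)) (x k (S m))))). lra.
    + rewrite sum_f_R0_scal_l, (Rmult_comm B). apply Rmult_le_compat_l; [apply pow2_ge_0|].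
      eapply Rle_trans; [| exact (normC2_le_bessel_bound x B k (Hx k) HB Hbound)].
      eapply Rle_trans; [| exact (Series_tail_le _ 1 (fun _ => pow2_ge_0 _) (Hx k))].
      exact (sum_le_Series_nonneg _ M (fun _ => pow2_ge_0 _)
               (proj1 (ex_series_incr_n _ 1) (Hx k))).
Qed.

Theorem BesselR_tildeR (x : nat -> nat -> R) :
  BesselR x -> BesselHt (fun k => tildeR (x k)) /\ ~ FrameHt (fun k => tildeR (x k)).
Proof.
  intro Hx. destruct (BesselR_nonneg_bound x Hx) as [B [HB Hbound]].
  exact (conj (tildeR_BesselHt x B (proj1 Hx) HB Hbound)
              (tildeR_not_FrameHt x B (proj1 Hx) HB Hbound)).
Qed.

Theorem BesselC_tildeC (x : nat -> nat -> C) :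
  BesselC x -> BesselHt (fun k => tildeC (x k)) /\ ~ FrameHt (fun k => tildeC (x k)).
Proof.
  intro Hx. destruct (BesselC_nonneg_bound x Hx) as [B [HB Hbound]].
  exact (conj (tildeC_BesselHt x B (proj1 Hx) HB Hbound)
              (tildeC_not_FrameHt x B (proj1 Hx) HB Hbound)).
Qed.

Theorem mainTheorem13 :
  (forall x : nat -> nat -> R, BesselR x ->
     BesselHt (fun k => tildeR (x k)) /\ ~ FrameHt (fun k => tildeR (x k))) /\
  (forall x : nat -> nat -> C, BesselC x ->
     BesselHt (fun k => tildeC (x k)) /\ ~ FrameHt (fun k => tildeC (x k))).
Proof. exact (conj BesselR_tildeR BesselC_tildeC). Qed.
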